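(* Let $G=\langle V,E\rangle$ be a DAG and let $E_1\subseteq E$ be such that $G$ has no $E_1$-shortcuts. Then for every topological sorting $\tau$ of $G$, $$|V|-|\pi^{E_1}_\tau| = |E_1|-\sum_{P_1,P_2\in\pi^{E_1}_\tau,\ P_1\neq P_2}|P_1\to_{E_1}P_2|.$$
   Context: A DAG is a finite directed acyclic graph. A topological sorting of $G$ is a bijection $\tau:V\to\{1,\dots,|V|\}$ with $\tau(u)<\tau(v)$ for every arc $\langle u,v\rangle\in E$. A path $\langle u_1,\dots,u_n\rangle$ ($n\ge1$) is an $E_1$-path if $\langle u_i,u_{i+1}\rangle\in E_1$ for all $i<n$; its length is $n-1$. An arc $\langle v,u\rangle\in E_1$ is an $E_1$-shortcut if there is an $E_1$-path from $v$ to $u$ of length at least $2$. An $E_1$-path $\langle u_1,\dots,u_n\rangle$ is a $\tau,E_1$-path if $\tau(u_{i+1})=\tau(u_i)+1$ for all $i<n$; it is maximal if its vertex set is not contained in the vertex set of any other $\tau,E_1$-path. $\pi^{E_1}_\tau$ denotes the set of vertex sets of maximal $\tau,E_1$-paths. For $V_1,V_2\subseteq V$, $V_1\to_{E_1}V_2=\{\langle v_1,v_2\rangle\in E_1:v_1\in V_1,v_2\in V_2\}$. *)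

From mathcomp Require Import all_boot.
From mathcomp Require Import boolp.
Set Implicit Arguments. Unset Strict Implicit. Unset Printing Implicit Defensive.

Section Dag.
Variable V : finType.

(* A path <u_1,...,u_n> (n >= 1) is represented as head x and tail p:
   x :: p. It is an e-path iff [path e x p]; its length is [size p]. *)

Definition acyclic (E : rel V) : Prop :=
  forall (v : V) (p : seq V), path E v p -> last v p = v -> p = [::].

Definition topological_sorting (E : rel V) (tau : V -> nat) : Prop :=
  [/\ injective tau,
      (forall v, 1 <= tau v <= #|V|),
      (forall k, 1 <= k <= #|V| -> exists v, tau v = k) &
      (forall u v, E u v -> tau u < tau v)].

Definition E1_shortcut (E1 : rel V) (v u : V) : Prop :=
  E1 v u /\ exists p : seq V, [/\ path E1 v p, last v p = u & 2 <= size p].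

Definition no_shortcuts (E1 : rel V) : Prop :=
  forall v u, ~ E1_shortcut E1 v u.

Definition tau_rel (tau : V -> nat) (E1 : rel V) : rel V :=
  fun x y => E1 x y && (tau y == (tau x).+1).

Definition tau_path (tau : V -> nat) (E1 : rel V) (x : V) (p : seq V) :=
  path (tau_rel tau E1) x p.

Definition maximal_tau_path (tau : V -> nat) (E1 : rel V) (x : V) (p : seq V)
  : Prop :=
  tau_path tau E1 x p /\
  forall (y : V) (q : seq V), tau_path tau E1 y q ->
    {subset x :: p <= y :: q} -> y :: q = x :: p.

Definition pi_tau (tau : V -> nat) (E1 : rel V) : {set {set V}} :=
  [set S : {set V} | `[< exists (x : V) (p : seq V),
        maximal_tau_path tau E1 x p /\ S = [set y in x :: p] >]].

Definition arcs_between (E1 : rel V) (V1 V2 : {set V}) : {set V * V} :=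
  [set a : V * V | [&& E1 a.1 a.2, a.1 \in V1 & a.2 \in V2]].

Definition arcs (E1 : rel V) : {set V * V} := [set a : V * V | E1 a.1 a.2].

End Dag.

From mathcomp Require Import all_boot all_order all_algebra.
From mathcomp Require Import boolp zify.
Import GRing.Theory.
Set Implicit Arguments. Unset Strict Implicit. Unset Printing Implicit Defensive.

(* As [tau] is injective, a vertex has at most one tau,E1-predecessor and at
   most one tau,E1-successor, so the tau,E1-steps cut V into chains, and the
   maximal tau,E1-paths are exactly these chains.  Every vertex but the first
   of its chain is entered by exactly one step, so |V| - |pi| counts the
   steps.  An E1-arc inside a chain spans the segment of the chain between
   its ends; without shortcuts that segment is a single step.  Hence the
   E1-arcs are the steps plus the arcs between distinct chains. *)

Lemma card_set_cond_sum (T : finType) (A : {set T}) (Q : pred T) :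
  #|[set a in A | Q a]| = \sum_(a in A) Q a.
Proof.
rewrite -sum1_card big_mkcond [RHS]big_mkcond; apply: eq_bigr => a _.
by rewrite inE; case: (a \in A); case: (Q a).
Qed.

Section TauChains.
Variables (V : finType) (E1 : rel V) (tau : V -> nat).
Hypothesis tau_inj : injective tau.
Hypothesis tau_range : forall v, 0 < tau v <= #|V|.

Local Notation R := (tau_rel tau E1).

Lemma tau_relS u v : R u v -> tau v = (tau u).+1.
Proof. by case/andP=> _ /eqP. Qed.

Lemma tau_rel_inl u w v : R u v -> R w v -> u = w.
Proof.
by move=> /tau_relS huv /tau_relS hwv; apply/tau_inj/succn_inj; rewrite -huv -hwv.
Qed.

Lemma tau_rel_inr u v w : R u v -> R u w -> v = w.
Proof. by move=> /tau_relS huv /tau_relS huw; apply: tau_inj; rewrite huv huw. Qed.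

Definition tau_pred (v : V) : V := odflt v [pick u | R u v].

Variant tau_pred_spec v : V -> Prop :=
  | TauPredArc u of R u v : tau_pred_spec v u
  | TauPredHead of (forall u, ~~ R u v) : tau_pred_spec v v.

Lemma tau_predP v : tau_pred_spec v (tau_pred v).
Proof.
rewrite /tau_pred; case: pickP => [u huv | noR] /=; first exact: TauPredArc.
by apply: TauPredHead => u; rewrite noR.
Qed.

Lemma tau_pred_rel u v : R u v -> tau_pred v = u.
Proof.
by move=> huv; case: tau_predP => [w /tau_rel_inl/(_ huv) // | /(_ u)]; rewrite huv.
Qed.

Lemma tau_pred_head v : (forall u, ~~ R u v) -> tau_pred v = v.
Proof. by case: tau_predP => // u huv /(_ u); rewrite huv. Qed.

Lemma tau_pred_le v : tau (tau_pred v) <= tau v.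
Proof. by case: tau_predP => // u /tau_relS ->. Qed.

(* Following predecessors from [v] reaches the first vertex of its chain in
   fewer than [tau v <= #|V|] steps, since [tau] drops by one at each step. *)
Definition chain_head (v : V) : V := iter #|V| tau_pred v.

Lemma iter_tau_pred n v :
  tau_pred (iter n tau_pred v) = iter n tau_pred v \/
  tau (iter n tau_pred v) + n = tau v.
Proof.
elim: n => [|n IHn]; first by right; rewrite addn0.
rewrite iterS; case: IHn => [hfix | htau]; first by left; rewrite !hfix.
case: (tau_predP (iter n tau_pred v)) => [u /tau_relS hS | /tau_pred_head ->].
  by right; lia.
by left.
Qed.

Lemma chain_head_fixed v : tau_pred (chain_head v) = chain_head v.
Proof.
case: (iter_tau_pred #|V| v) => // htau.
by have := tau_range v; have := tau_range (chain_head v); rewrite /chain_head; lia.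
Qed.

Lemma chain_head_pred v : chain_head (tau_pred v) = chain_head v.
Proof. by rewrite /chain_head -iterSr iterS chain_head_fixed. Qed.

Lemma chain_head_rel u v : R u v -> chain_head u = chain_head v.
Proof. by move=> /tau_pred_rel <-; rewrite chain_head_pred. Qed.

Lemma chain_head_idem v : chain_head (chain_head v) = chain_head v.
Proof. exact: iter_fix (chain_head_fixed v). Qed.

Lemma tau_chain_head_le v : tau (chain_head v) <= tau v.
Proof.
rewrite /chain_head; elim: #|V| => // n IHn.
by rewrite iterS (leq_trans (tau_pred_le _)).
Qed.

Lemma path_chain_head x p :
  path R x p -> {in x :: p, forall y, chain_head y = chain_head x}.
Proof.
elim: p x => [|a p IHp] x /=; first by move=> _ y; rewrite inE => /eqP->.
case/andP=> hxa hp y; rewrite inE => /predU1P[-> // | hy].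
by rewrite (IHp a hp y hy) (chain_head_rel hxa).
Qed.

Lemma tau_last_path x p : path R x p -> tau (last x p) = tau x + size p.
Proof.
elim: p x => [|a p IHp] x /=; first by rewrite addn0.
by case/andP=> /tau_relS hxa /IHp->; rewrite hxa addSnnS.
Qed.

Lemma tau_mem_path x p y :
  path R x p -> y \in x :: p -> tau x <= tau y <= tau x + size p.
Proof.
elim: p x => [|a p IHp] x /=; first by move=> _; rewrite inE => /eqP->; lia.
case/andP=> /tau_relS hxa hp; rewrite inE => /predU1P[-> | /(IHp a hp)]; lia.
Qed.

Lemma tau_path_prefix x p q :
  path R x p -> path R x q -> size p <= size q -> p = take (size p) q.
Proof.
elim: p x q => [|a p IHp] x [|b q] //= /andP[hxa hp] /andP[hxb hq] hsize.
have eab := tau_rel_inr hxa hxb; subst b.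
by rewrite -(IHp a q).
Qed.

Lemma tau_path_mem_eq x p y q :
  path R x p -> path R y q -> x :: p =i y :: q -> x :: p = y :: q.
Proof.
move=> hp hq eq_pq.
have in_q z : z \in x :: p -> z \in y :: q by rewrite eq_pq.
have in_p z : z \in y :: q -> z \in x :: p by rewrite eq_pq.
have := tau_mem_path hq (in_q _ (mem_head x p)).
have := tau_mem_path hp (in_p _ (mem_head y q)).
have := tau_mem_path hq (in_q _ (mem_last x p)).
have := tau_mem_path hp (in_p _ (mem_last y q)).
rewrite (tau_last_path hp) (tau_last_path hq) => hyq hxp hy hx.
have exy : x = y by apply: tau_inj; lia.
subst y; have hsize : size p = size q by lia.
by rewrite (tau_path_prefix hp hq) ?hsize ?take_size.
Qed.

Lemma same_chain_path u v : chain_head u = chain_head v -> tau u <= tau v ->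
  exists2 p, path R u p & last u p = v.
Proof.
have [n] := ubnP (tau v); elim: n v => // n IHn v hvn hchain hle.
have [<- | neq_uv] := eqVneq u v; first by exists [::].
have ltuv : tau u < tau v by rewrite ltn_neqAle hle andbT (inj_eq tau_inj).
case: (tau_predP v) => [w hwv | /tau_pred_head hhead].
  have hw := tau_relS hwv.
  have [|||p hp hlast] := IHn w; [lia | by rewrite (chain_head_rel hwv) | lia |].
  by exists (rcons p v); rewrite ?rcons_path ?last_rcons ?hp ?hlast.
have := tau_chain_head_le u; rewrite hchain /chain_head iter_fix //; lia.
Qed.

Definition chain_block v : {set V} := [set u | chain_head u == chain_head v].

Lemma chain_block_eq u v :
  (chain_block u == chain_block v) = (chain_head u == chain_head v).
Proof.
apply/eqP/eqP => [/setP/(_ u) | huv]; first by rewrite !inE eqxx => /esym/eqP.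
by apply/setP => w; rewrite !inE huv.
Qed.

Lemma chain_block_path v :
  exists q, path R (chain_head v) q /\ [set y in chain_head v :: q] = chain_block v.
Proof.
move: (chain_head_idem v); set h := chain_head v => hh.
have [m /eqP hm max_m] := @arg_maxnP _ v (fun g => chain_head g == h) tau (eqxx _).
have [q hq hlast] : exists2 q, path R h q & last h q = m.
  by apply: same_chain_path; rewrite ?hh ?hm //; apply: max_m; rewrite hh.
exists q; split=> //; apply/setP => y; rewrite in_set [RHS]inE -/h.
apply/idP/eqP => [hy | hy]; first by rewrite (path_chain_head hq hy) hh.
have [r hr hrlast] : exists2 r, path R h r & last h r = y.
  by apply: same_chain_path; rewrite ?hh ?hy // -hy tau_chain_head_le.
have hsize : size r <= size q.
  rewrite -(leq_add2l (tau h)) -(tau_last_path hr) -(tau_last_path hq) hrlast hlast.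
  by apply: max_m; rewrite hy.
have : y \in h :: r by rewrite -hrlast mem_last.
by rewrite (tau_path_prefix hr hq hsize) !inE => /predU1P[-> | /mem_take ->];
  rewrite ?eqxx ?orbT.
Qed.

Lemma maximal_chain_block v : exists q, maximal_tau_path tau E1 (chain_head v) q /\
  [set y in chain_head v :: q] = chain_block v.
Proof.
have [q [hq hset]] := chain_block_path v; exists q; split=> //; split=> // y r hr hsub.
apply: (tau_path_mem_eq hr hq) => z; apply/idP/idP => [hz | /hsub //].
have hv : chain_head v \in y :: r := hsub _ (mem_head _ _).
have : z \in chain_block v.
  by rewrite inE (path_chain_head hr hz) -(path_chain_head hr hv) chain_head_idem.
by rewrite -hset inE.
Qed.

Lemma maximal_path_block x p :
  maximal_tau_path tau E1 x p -> [set y in x :: p] = chain_block x.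
Proof.
case=> hp hmax; have [q [hq hset]] := chain_block_path x.
rewrite -hset -(hmax _ _ hq) // => y hy.
have : y \in chain_block x by rewrite inE (path_chain_head hp hy).
by rewrite -hset inE.
Qed.

Definition chain_heads : {set V} := [set v | tau_pred v == v].

Lemma pi_tau_chain_blocks : pi_tau tau E1 = chain_block @: chain_heads.
Proof.
apply/setP => S; rewrite inE; apply/asboolP/imsetP => [[x [p [hmax ->]]] | [v _ ->]].
  exists (chain_head x); first by rewrite inE chain_head_fixed.
  by rewrite (maximal_path_block hmax); apply/eqP; rewrite chain_block_eq chain_head_idem.
by have [q [hmax hset]] := maximal_chain_block v; exists (chain_head v), q.
Qed.

Lemma card_pi_tau : #|pi_tau tau E1| = #|chain_heads|.
Proof.
rewrite pi_tau_chain_blocks; apply: card_in_imset => u v.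
rewrite !inE => /eqP hu /eqP hv /eqP; rewrite chain_block_eq /chain_head !iter_fix //.
exact: eqP.
Qed.

Lemma chain_block_pi_tau x : chain_block x \in pi_tau tau E1.
Proof.
rewrite pi_tau_chain_blocks; apply/imsetP; exists (chain_head x).
  by rewrite inE chain_head_fixed.
by apply/eqP; rewrite chain_block_eq chain_head_idem.
Qed.

Lemma mem_pi_tau P x : P \in pi_tau tau E1 -> (x \in P) = (P == chain_block x).
Proof.
by rewrite pi_tau_chain_blocks => /imsetP[v _ ->]; rewrite chain_block_eq inE eq_sym.
Qed.

Lemma sum_pi_tau_mem x (F : {set V} -> nat) :
  \sum_(P in pi_tau tau E1) (x \in P) * F P = F (chain_block x).
Proof.
rewrite (bigD1 (chain_block x)) ?chain_block_pi_tau //=.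
rewrite big1 => [|P /andP[hP neqP]]; last by rewrite (mem_pi_tau _ hP) (negbTE neqP).
by rewrite (mem_pi_tau _ (chain_block_pi_tau x)) eqxx mul1n addn0.
Qed.

Definition tau_arcs : {set V * V} := [set a | R a.1 a.2].

Lemma card_tau_arcs : #|tau_arcs| + #|chain_heads| = #|V|.
Proof.
rewrite -(cardsC chain_heads) addnC; congr (_ + _).
have -> : ~: chain_heads = [set a.2 | a in tau_arcs].
  apply/setP => v; rewrite !inE; apply/idP/imsetP => [|[[u w] huw ->]].
    by case: tau_predP => [u huv _ | _]; [exists (u, v); rewrite ?inE | rewrite eqxx].
  rewrite inE /= in huw; rewrite (tau_pred_rel huw); apply/eqP => euw.
  by have := tau_relS huw; rewrite euw => /n_Sn.
rewrite card_in_imset // => -[u1 v1] [u2 v2]; rewrite !inE /= => h1 h2 ev.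
by move: h1; rewrite ev => /tau_rel_inl/(_ h2)->.
Qed.

Hypothesis E1_tau : forall u v, E1 u v -> tau u < tau v.
Hypothesis E1_no_shortcuts : no_shortcuts E1.

Lemma tau_rel_sub : subrel R E1.
Proof. by move=> u v /andP[]. Qed.

Lemma E1_same_chain u v : E1 u v -> (chain_head u == chain_head v) = R u v.
Proof.
move=> huv; apply/eqP/idP => [hchain | /chain_head_rel //].
have [p hp hlast] := same_chain_path hchain (ltnW (E1_tau huv)).
case: p hp hlast => [|a [|b p]] /= hp hlast.
- by move: (E1_tau huv); rewrite hlast ltnn.
- by move: hp; rewrite -hlast andbT.
exfalso; apply: E1_no_shortcuts; split; first exact: huv.
by exists [:: a, b & p]; split=> //; apply: (sub_path (x := u) tau_rel_sub).
Qed.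

Definition cross_arcs : {set V * V} :=
  [set a in arcs E1 | chain_block a.1 != chain_block a.2].

Lemma card_arcs : #|arcs E1| = #|tau_arcs| + #|cross_arcs|.
Proof.
rewrite -(cardsID [set a : V * V | chain_head a.1 == chain_head a.2] (arcs E1)).
congr (_ + _); apply: eq_card => -[u v]; rewrite !inE /=.
  apply/andP/idP => [[huv] | huv]; first by rewrite E1_same_chain.
  by have huv' := tau_rel_sub huv; rewrite huv' E1_same_chain.
by rewrite chain_block_eq andbC.
Qed.

Lemma sum_arcs_between :
  \sum_(P1 in pi_tau tau E1) \sum_(P2 in pi_tau tau E1 | P2 != P1)
     #|arcs_between E1 P1 P2| = #|cross_arcs|.
Proof.
have card_between P1 P2 : #|arcs_between E1 P1 P2| =
    \sum_(a in arcs E1) ((a.1 \in P1) && (a.2 \in P2)).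
  by rewrite -card_set_cond_sum; apply: eq_card => a; rewrite !inE andbA.
rewrite /cross_arcs card_set_cond_sum.
under eq_bigr => P1 _ do under eq_bigr => P2 _ do rewrite card_between.
under eq_bigr => P1 _ do rewrite exchange_big.
rewrite exchange_big; apply: eq_bigr => a _ /=.
rewrite eq_sym -(sum_pi_tau_mem a.1 (fun P1 => chain_block a.2 != P1)).
apply: eq_bigr => P1 _; rewrite -(sum_pi_tau_mem a.2 (fun P2 => P2 != P1)) big_distrr.
rewrite big_mkcondr /=; apply: eq_bigr => P2 _.
by case: (P2 != P1); case: (a.1 \in P1); case: (a.2 \in P2).
Qed.

End TauChains.

Theorem lemma3p1 (V : finType) (E E1 : rel V)
  (hdag : acyclic E)
  (hsub : forall u v, E1 u v -> E u v)
  (hnosc : no_shortcuts E1)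
  (tau : V -> nat) (htau : topological_sorting E tau) :
  (#|V|%:Z - #|pi_tau tau E1|%:Z =
   #|arcs E1|%:Z -
   (\sum_(P1 in pi_tau tau E1) \sum_(P2 in pi_tau tau E1 | P2 != P1)
       #|arcs_between E1 P1 P2|)%N%:Z)%R.
Proof.
case: htau => tau_inj tau_range _ tau_mono.
have E1_tau u v : E1 u v -> tau u < tau v by move/hsub/tau_mono.
rewrite sum_arcs_between // (card_arcs (tau := tau)) // card_pi_tau //.
by rewrite -(card_tau_arcs E1 tau_inj) !PoszD !addrK.
Qed.
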